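(* Let $\mathcal Q=\mathbb R^n$ and let $g_s$ be a one-parameter group of affine transformations acting by $\Phi_{g_s}(q)=A_sq+c_s$ ($A_s\in\mathbb R^{n\times n}$ invertible, $c_s\in\mathbb R^n$, smooth in $s$, $A_0=I$, $c_0=0$), with control action given by $\Psi_{g_s}(q)$ satisfying $\rho(A_sq+c_s)\Psi_{g_s}(q)=A_s\rho(q)$. Put $B=\frac{d}{ds}A_s|_{s=0}$, $d=\frac{d}{ds}c_s|_{s=0}$. (i) (Control-independent case.) If $\tilde L(A_sq+c_s,A_s^{-\top}\lambda,A_sv,A_s^{-\top}v_\lambda)=\tilde L(q,\lambda,v,v_\lambda)$ for all $s$ and all arguments, then for all $\alpha,\gamma\in[0,1]$ the approximate discrete Lagrangian $\tilde L_d$ satisfies $\tilde L_d(\tilde\Phi_{g_s}(y_k),\tilde\Phi_{g_s}(y_{k+1}),h)=\tilde L_d(y_k,y_{k+1},h)$, where $\tilde\Phi_{g_s}(q,\lambda)=(A_sq+c_s,A_s^{-\top}\lambda)$. (ii) (Control-dependent case.) If $\tilde L^{\mathcal E}(A_sq+c_s,A_s^{-\top}\lambda,A_sv,A_s^{-\top}v_\lambda,\Psi_{g_s}(q)u)=\tilde L^{\mathcal E}(q,\lambda,v,v_\lambda,u)$ for all $s$ and all arguments, and either $\Psi_{g_s}(q)=E_s$ is independent of $q$ or $\beta=\gamma$, then $\tilde L^{\mathcal E}_d$ is invariant under $(y_k,y_{k+1},U^{(1)},U^{(2)})\mapsto(\tilde\Phi_{g_s}(y_k),\tilde\Phi_{g_s}(y_{k+1}),\Psi_{g_s}(\bar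 q_k^\beta)U^{(1)},\Psi_{g_s}(\bar q_k^{1-\beta})U^{(2)})$. In either case the quantity $I_d=p_q^\top(Bq+d)-p_\lambda^\top B^\top\lambda$, evaluated at $(y_k,p_{y,k})$ with $p_{y,k}=(p_{q,k},p_{\lambda,k})$ the discrete momenta, is conserved along solutions of the corresponding discrete Euler–Lagrange equations (and, in case (ii), the discrete minimisation conditions $D_{U^{(1)}}\tilde L^{\mathcal E}_{d,k}=D_{U^{(2)}}\tilde L^{\mathcal E}_{d,k}=0$).
   Context: Setting: $\mathcal Q=\mathbb R^n$, $y=(q,\lambda)\in T^*\mathcal Q$, controls in $\mathbb R^m$; smooth $f(q,v)$, injective $\rho(q)\in\mathbb R^{n\times m}$, $\mathrm g(q)$ symmetric positive definite, $b(q)=\rho(q)\mathrm g(q)^{-1}\rho(q)^\top$. $\tilde L^{\mathcal E}(q,\lambda,v,v_\lambda,u)=v_\lambda^\top v+\lambda^\top(f(q,v)+\rho(q)u)-\frac12u^\top\mathrm g(q)u$, $\tilde L(q,\lambda,v,v_\lambda)=v_\lambda^\top v+\lambda^\top f(q,v)+\frac12\lambda^\top b(q)\lambda$. $A^{-\top}$ denotes $(A^{-1})^\top$. Notation: $\bar y_k^\gamma=\gamma y_k+(1-\gamma)y_{k+1}$ (similarly $\bar q_k^\gamma$), $\Delta y_k=(y_{k+1}-y_k)/h$. Low-order discrete Lagrangians with parameters $\alpha,\beta,\gamma\in[0,1]$: $\tilde L_d(y_k,y_{k+1},h)=h\alpha\tilde L(\bar y_k^\gamma,\Delta y_k)+h(1-\alpha)\tilde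 L(\bar y_k^{1-\gamma},\Delta y_k)$ and $\tilde L^{\mathcal E}_d(y_k,y_{k+1},U^{(1)},U^{(2)},h)=h[\alpha\tilde L^{\mathcal E}(\bar y_k^\gamma,\Delta y_k,U^{(1)})+(1-\alpha)\tilde L^{\mathcal E}(\bar y_k^{1-\gamma},\Delta y_k,U^{(2)})]$, where $U^{(1)},U^{(2)}$ approximate the control at times $\beta t_k+(1-\beta)t_{k+1}$ and $(1-\beta)t_k+\beta t_{k+1}$. Discrete momenta: $p^-_{y,k}=-D_1L_d(y_k,y_{k+1},\dots)$, $p^+_{y,k+1}=D_2L_d(y_k,y_{k+1},\dots)$ for $L_d\in\{\tilde L_d,\tilde L^{\mathcal E}_d\}$; along solutions of the discrete Euler–Lagrange equations $D_2L_d(y_{k-1},y_k)+D_1L_d(y_k,y_{k+1})=0$ they coincide, $p_{y,k}:=p^-_{y,k}=p^+_{y,k}$, split as $p_{y,k}=(p_{q,k},p_{\lambda,k})$ in the $q$ and $\lambda$ components. *)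

(* Q = R^n is 'cV[R]_n (column
   vectors), controls live in 'cV[R]_m, R : realType. *)
From mathcomp Require Import all_boot all_order all_algebra.
From mathcomp Require Import all_classical all_reals all_analysis.
Set Implicit Arguments. Unset Strict Implicit. Unset Printing Implicit Defensive.
Import Order.TTheory GRing.Theory Num.Theory.
Local Open Scope ring_scope.

Definition dfun {R : realType} {V W : normedModType R} (f : V -> W) (x v : V) : W :=
  'd f x v.

(* C^k : C^0 = continuous; C^(k+1) = differentiable everywhere and the map
   (x,v) |-> Df(x)v is C^k (in finite dimensions this is the usual C^k). *)
Fixpoint Ck {R : realType} (k : nat) (V W : normedModType R) (f : V -> W) : Prop :=
  match k with
  | 0 => continuous f
  | k'.+1 => (forall x, differentiable f x) /\
      @Ck R k' (V * V)%type W (fun p : V * V => dfun f p.1 p.2)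
  end.

Definition smooth {R : realType} {V W : normedModType R} (f : V -> W) : Prop :=
  forall k, @Ck R k V W f.

Section Defs.
Context {R : realType}.

Definition dotv {n : nat} (u v : 'cV[R]_n) : R := (u^T *m v) ord0 ord0.

Definition invT {n : nat} (A : 'M[R]_n) : 'M[R]_n := (invmx A)^T.

Definition sym_posdef {m : nat} (M : 'M[R]_m) : Prop :=
  M^T = M /\ forall u : 'cV[R]_m, u != 0 -> 0 < dotv u (M *m u).

Definition grad {n : nat} (F : 'cV[R]_n -> R) (x : 'cV[R]_n) : 'cV[R]_n :=
  \col_i ('D_(delta_mx i ord0) F x).

Variables (n m : nat).
Implicit Types (f : 'cV[R]_n -> 'cV[R]_n -> 'cV[R]_n)
  (rho : 'cV[R]_n -> 'M[R]_(n, m)) (g : 'cV[R]_n -> 'M[R]_m).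

Definition bmat rho g (q : 'cV[R]_n) : 'M[R]_n :=
  rho q *m invmx (g q) *m (rho q)^T.

Definition LtE f rho g (q l v vl : 'cV[R]_n) (u : 'cV[R]_m) : R :=
  dotv vl v + dotv l (f q v + rho q *m u) - 2^-1 * dotv u (g q *m u).

Definition Lt f rho g (q l v vl : 'cV[R]_n) : R :=
  dotv vl v + dotv l (f q v) + 2^-1 * dotv l (bmat rho g q *m l).

Definition cvx {p : nat} (gam : R) (x x1 : 'cV[R]_p) : 'cV[R]_p :=
  gam *: x + (1 - gam) *: x1.

Definition dq {p : nat} (h : R) (x x1 : 'cV[R]_p) : 'cV[R]_p := h^-1 *: (x1 - x).

Definition Ltd f rho g (alpha gam h : R) (qk lk qk1 lk1 : 'cV[R]_n) : R :=
  h * alpha * Lt f rho g (cvx gam qk qk1) (cvx gam lk lk1) (dq h qk qk1) (dq h lk lk1)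
  + h * (1 - alpha) *
      Lt f rho g (cvx (1 - gam) qk qk1) (cvx (1 - gam) lk lk1) (dq h qk qk1) (dq h lk lk1).

Definition LtdE f rho g (alpha gam h : R) (qk lk qk1 lk1 : 'cV[R]_n)
  (U1 U2 : 'cV[R]_m) : R :=
  h * (alpha * LtE f rho g (cvx gam qk qk1) (cvx gam lk lk1) (dq h qk qk1) (dq h lk lk1) U1
       + (1 - alpha) *
         LtE f rho g (cvx (1 - gam) qk qk1) (cvx (1 - gam) lk lk1)
             (dq h qk qk1) (dq h lk lk1) U2).

End Defs.

Section Mechanics.
Context {R : realType} {n : nat}.
Local Notation L4 := ('cV[R]_n -> 'cV[R]_n -> 'cV[R]_n -> 'cV[R]_n -> R).

Definition D1q (L : L4) a b c d := grad (fun x => L x b c d) a.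
Definition D1l (L : L4) a b c d := grad (fun x => L a x c d) b.
Definition D2q (L : L4) a b c d := grad (fun x => L a b x d) c.
Definition D2l (L : L4) a b c d := grad (fun x => L a b c x) d.

(* discrete Euler-Lagrange equations at node k (0 < k), for the family of
   discrete Lagrangians Lk k on the segment [t_k, t_{k+1}]:
   D_2 L_d(y_{k-1}, y_k) + D_1 L_d(y_k, y_{k+1}) = 0 *)
Definition DEL (Lk : nat -> L4) (qs ls : nat -> 'cV[R]_n) (k : nat) : Prop :=
  D2q (Lk k.-1) (qs k.-1) (ls k.-1) (qs k) (ls k)
    + D1q (Lk k) (qs k) (ls k) (qs k.+1) (ls k.+1) = 0 /\
  D2l (Lk k.-1) (qs k.-1) (ls k.-1) (qs k) (ls k)
    + D1l (Lk k) (qs k) (ls k) (qs k.+1) (ls k.+1) = 0.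

(* discrete momenta p_{y,k} = p^-_{y,k} = -D_1 L_d(y_k, y_{k+1}) *)
Definition pq_k (Lk : nat -> L4) (qs ls : nat -> 'cV[R]_n) (k : nat) : 'cV[R]_n :=
  - D1q (Lk k) (qs k) (ls k) (qs k.+1) (ls k.+1).
Definition pl_k (Lk : nat -> L4) (qs ls : nat -> 'cV[R]_n) (k : nat) : 'cV[R]_n :=
  - D1l (Lk k) (qs k) (ls k) (qs k.+1) (ls k.+1).

Definition Inoether (B : 'M[R]_n) (d : 'cV[R]_n) (q l pq pl : 'cV[R]_n) : R :=
  dotv pq (B *m q + d) - dotv pl (B^T *m l).

Definition Id_k B d (Lk : nat -> L4) (qs ls : nat -> 'cV[R]_n) (k : nat) : R :=
  Inoether B d (qs k) (ls k) (pq_k Lk qs ls k) (pl_k Lk qs ls k).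

Definition conserved_along B d (Lk : nat -> L4) (qs ls : nat -> 'cV[R]_n) (N : nat) : Prop :=
  (forall k, (0 < k < N)%N -> DEL Lk qs ls k) ->
  forall k j, (0 < k < N)%N -> (0 < j < N)%N -> Id_k B d Lk qs ls k = Id_k B d Lk qs ls j.
End Mechanics.

(* The affine action (q, lambda) |-> (A_s q + c_s, A_s^-T lambda) commutes with the convex
   combinations [cvx] and the difference quotients [dq], so invariance of the continuous
   Lagrangian passes to the discrete one at every node; the control action must then be
   evaluated at matching points, hence beta = gam unless Psi does not depend on q.
   Differentiating L_d(g_s y_k, g_s y_{k+1}, controls) = L_d(y_k, y_{k+1}, controls) at s = 0,
   the minimisation conditions kill the control slots and leave the discrete Noether identity
   D_1 L_d . xi(y_k) + D_2 L_d . xi(y_{k+1}) = 0 with generator xi(q, l) = (B q + d, - B^T l)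
   (A_s^-1 = A_(-s) gives the second component).  The discrete Euler-Lagrange equations turn
   D_2 L_d(y_(k-1), y_k) into - D_1 L_d(y_k, y_(k+1)), so the identity reads I_d(k) = I_d(k-1). *)

From HB Require Import structures.
From mathcomp Require Import all_boot all_order all_algebra.
From mathcomp Require Import all_classical all_reals all_analysis.
From mathcomp Require Import lra.
Import Order.TTheory GRing.Theory Num.Theory.

Set Implicit Arguments.
Unset Strict Implicit.
Unset Printing Implicit Defensive.
Local Open Scope ring_scope.

(* The normed-module instance of ['cV[R]_k] is not found by unification from a
   point alone, so points of product spaces are typed with its canonical name. *)
Local Notation cV R k := (matrix_matrix__canonical__normed_module_NormedModule R k 1).

Section MatrixDifferentiable.
Variables (R : realType) (X : normedModType R) (x : X).

Lemma differentiable_big_sum (I : Type) (r : seq I) (P : pred I)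
    (W : normedModType R) (G : I -> X -> W) :
  (forall i, differentiable (G i) x) ->
  differentiable (fun y => \sum_(i <- r | P i) G i y) x.
Proof.
by move=> dG; rewrite -fct_sumE; elim/big_ind: _ => // F1 F2; exact: differentiableD.
Qed.

Lemma differentiable_big_prod (I : Type) (r : seq I) (P : pred I) (G : I -> X -> R) :
  (forall i, differentiable (G i) x) ->
  differentiable (fun y => \prod_(i <- r | P i) G i y) x.
Proof.
by move=> dG; rewrite -fct_prodE; elim/big_ind: _ => // F1 F2; exact: differentiableM.
Qed.

Lemma differentiable_mx_coord a b (F : X -> 'M[R]_(a, b)) i j :
  differentiable F x -> differentiable (fun y => F y i j) x.
Proof. by move=> dF; exact: differentiable_comp dF (differentiable_coord _ i j). Qed.

Lemma differentiable_mx a b (F : X -> 'M[R]_(a, b)) :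
  (forall i j, differentiable (fun y => F y i j) x) -> differentiable F x.
Proof.
move=> dF; rewrite (_ : F = fun y => \sum_i \sum_j F y i j *: delta_mx i j);
  last by apply: funext => y; exact: matrix_sum_delta.
by do 2!apply: differentiable_big_sum => ?; exact: differentiableZl.
Qed.

Lemma differentiable_mulmx a b c (F : X -> 'M[R]_(a, b)) (G : X -> 'M[R]_(b, c)) :
  differentiable F x -> differentiable G x -> differentiable (fun y => F y *m G y) x.
Proof.
move=> dF dG; apply: differentiable_mx => i j.
under eq_fun do rewrite mxE.
by apply: differentiable_big_sum => k; apply: differentiableM;
  exact: differentiable_mx_coord.
Qed.

Lemma differentiable_trmx a b (F : X -> 'M[R]_(a, b)) :
  differentiable F x -> differentiable (fun y => (F y)^T) x.
Proof.
move=> dF; apply: differentiable_mx => i j.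
under eq_fun do rewrite mxE.
exact: differentiable_mx_coord.
Qed.

Lemma differentiable_dotv k (F G : X -> 'cV[R]_k) :
  differentiable F x -> differentiable G x -> differentiable (fun y => dotv (F y) (G y)) x.
Proof.
move=> dF dG; apply: differentiable_mx_coord.
by apply: differentiable_mulmx => //; exact: differentiable_trmx.
Qed.

Lemma differentiable_det k (F : X -> 'M[R]_k) :
  differentiable F x -> differentiable (fun y => \det (F y)) x.
Proof.
move=> dF; apply: differentiable_big_sum => s.
apply: differentiableM; first exact: differentiable_cst.
by apply: differentiable_big_prod => i; exact: differentiable_mx_coord.
Qed.

(* Cramer's rule makes every entry of the inverse a rational function of the entries. *)
Lemma differentiable_invmx k (F : X -> 'M[R]_k) :
  (forall y, F y \in unitmx) -> differentiable F x ->
  differentiable (fun y => invmx (F y)) x.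
Proof.
move=> Funit dF; apply: differentiable_mx => i j.
under eq_fun do rewrite /invmx Funit !mxE.
apply: differentiableM; last apply: differentiableM.
- apply: differentiableV; first exact: differentiable_det.
  by rewrite -unitfE -unitmxE.
- exact: differentiable_cst.
apply: differentiable_det; apply: differentiable_mx => a b.
under eq_fun do rewrite !mxE.
exact: differentiable_mx_coord.
Qed.

End MatrixDifferentiable.

Section Projections.
Variables (R : realType) (U V : normedModType R).

Lemma differentiable_fst (p : U * V) : differentiable (fun q : U * V => q.1) p.
Proof.
have fst_lin : linear (fun q : U * V => q.1) by [].
pose fstL : {linear (U * V)%type -> U} :=
  HB.pack (fun q : U * V => q.1) (GRing.isLinear.Build _ _ _ _ _ fst_lin).
by apply: (@linear_differentiable _ _ _ fstL) => z; exact: cvg_fst.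
Qed.

Lemma differentiable_snd (p : U * V) : differentiable (fun q : U * V => q.2) p.
Proof.
have snd_lin : linear (fun q : U * V => q.2) by [].
pose sndL : {linear (U * V)%type -> V} :=
  HB.pack (fun q : U * V => q.2) (GRing.isLinear.Build _ _ _ _ _ snd_lin).
by apply: (@linear_differentiable _ _ _ sndL) => z; exact: cvg_snd.
Qed.

Variables (X : normedModType R) (F : X -> U * V) (x : X).
Hypothesis dF : differentiable F x.

Lemma differentiable_fst_comp : differentiable (fun y => (F y).1) x.
Proof. exact: differentiable_comp dF (differentiable_fst _). Qed.

Lemma differentiable_snd_comp : differentiable (fun y => (F y).2) x.
Proof. exact: differentiable_comp dF (differentiable_snd _). Qed.

End Projections.

Section DotProduct.
Variable R : realType.

Lemma dotvC k (u v : 'cV[R]_k) : dotv u v = dotv v u.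
Proof. by rewrite /dotv !mxE; apply: eq_bigr => i _; rewrite !mxE mulrC. Qed.

Lemma dotvNl k (u v : 'cV[R]_k) : dotv (- u) v = - dotv u v.
Proof. by rewrite /dotv linearN /= mulNmx mxE. Qed.

Lemma dotvNr k (u v : 'cV[R]_k) : dotv u (- v) = - dotv u v.
Proof. by rewrite /dotv mulmxN mxE. Qed.

Lemma dotvr0 k (u : 'cV[R]_k) : dotv u 0 = 0.
Proof. by rewrite /dotv mulmx0 mxE. Qed.

End DotProduct.

Section Partials.
Variable R : realType.

Lemma linear_dotvE k (psi : 'cV[R]_k -> R) :
  (forall a u v, psi (a *: u + v) = a * psi u + psi v) ->
  forall v, psi v = dotv v (\col_j psi (delta_mx j ord0)).
Proof.
move=> psi_lin v.
have psi0 : psi 0 = 0.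
  by rewrite -[X in psi X](addr0 0) -[X in psi (X + _)](scaler0 _ (-1)) psi_lin mulN1r addNr.
have psiD : {morph psi : u w / u + w} by move=> u w; rewrite -[u]scale1r psi_lin mul1r scale1r.
have psiZ a u : psi (a *: u) = a * psi u by rewrite -[a *: u]addr0 psi_lin psi0 addr0.
rewrite {1}[v]matrix_sum_delta (big_morph psi psiD psi0) /dotv mxE.
by apply: eq_bigr => j _; rewrite big_ord1 psiZ !mxE.
Qed.

Lemma diff_slot_grad (X : normedModType R) (F : X -> R) (x : X) k
    (i : 'cV[R]_k -> X) (G : 'cV[R]_k -> R) (z : cV R k) :
  differentiable F x ->
  (forall a u v, i (a *: u + v) = a *: i u + i v) ->
  (forall v, G (v + z) = F (i v + x)) ->
  forall v, 'd F x (i v) = dotv v (grad G z).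
Proof.
move=> dF i_lin Gi v.
have i0 : i 0 = 0.
  by rewrite -[X in i X](addr0 0) -[X in i (X + _)](scaler0 _ (-1)) i_lin scaleN1r addNr.
rewrite (@linear_dotvE _ (fun v => 'd F x (i v))) => [|a u w]; last by rewrite i_lin linearP.
congr dotv; apply/matrixP => j o; rewrite !mxE -deriveE // /derive.
have Fx : F x = G z by rewrite -[x]add0r -i0 -Gi add0r.
rewrite Fx; do 2 f_equal; apply: funext => h /=.
by rewrite -[h *: i _]addr0 -i0 -i_lin addr0 -Gi.
Qed.

Lemma grad_cst k (a : R) (z : 'cV[R]_k) : grad (fun _ => a) z = 0.
Proof. by apply/matrixP => i j; rewrite !mxE; exact: derive_cst. Qed.

Lemma pair_addE (U V : zmodType) (a c : U) (b d : V) :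
  ((a, b) + (c, d) : U * V) = (a + c, b + d).
Proof. by []. Qed.

Lemma pair_scaleE (U V : lmodType R) (k : R) (a : U) (b : V) :
  (k *: ((a, b) : U * V)) = (k *: a, k *: b).
Proof. by []. Qed.

Definition uncurry6 {T1 T2 T3 T4 T5 T6 U : Type}
    (L : T1 -> T2 -> T3 -> T4 -> T5 -> T6 -> U)
    (p : ((T1 * T2) * (T3 * T4)) * (T5 * T6)) : U :=
  L p.1.1.1 p.1.1.2 p.1.2.1 p.1.2.2 p.2.1 p.2.2.

Lemma diff_uncurry6_grad n m
    (L : 'cV[R]_n -> 'cV[R]_n -> 'cV[R]_n -> 'cV[R]_n -> 'cV[R]_m -> 'cV[R]_m -> R)
    (q l q1 l1 w1 w2 w3 w4 : cV R n) (u1 u2 w5 w6 : cV R m) :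
  differentiable (uncurry6 L) (((q, l), (q1, l1)), (u1, u2)) ->
  grad (fun u => L q l q1 l1 u u2) u1 = 0 -> grad (fun u => L q l q1 l1 u1 u) u2 = 0 ->
  'd (uncurry6 L) (((q, l), (q1, l1)), (u1, u2)) (((w1, w2), (w3, w4)), (w5, w6)) =
    dotv w1 (grad (fun a => L a l q1 l1 u1 u2) q)
  + dotv w2 (grad (fun a => L q a q1 l1 u1 u2) l)
  + dotv w3 (grad (fun a => L q l a l1 u1 u2) q1)
  + dotv w4 (grad (fun a => L q l q1 a u1 u2) l1).
Proof.
move=> dL crit_u1 crit_u2.
have -> : (((w1, w2), (w3, w4)), (w5, w6)) =
    (((w1, 0), (0, 0)), (0, 0)) + (((0, w2), (0, 0)), (0, 0))
  + (((0, 0), (w3, 0)), (0, 0)) + (((0, 0), (0, w4)), (0, 0))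
  + (((0, 0), (0, 0)), (w5, 0)) + (((0, 0), (0, 0)), (0, w6)).
  by rewrite !pair_addE !addr0 !add0r.
rewrite !linearD.
have -> : 'd (uncurry6 L) (((q, l), (q1, l1)), (u1, u2)) (((0, 0), (0, 0)), (w5, 0)) = 0.
  rewrite (diff_slot_grad (i := fun v => (((0, 0), (0, 0)), (v, 0)))
    (G := fun a => L q l q1 l1 a u2) (z := u1) dL) ?crit_u1 ?dotvr0 //.
  - by move=> a u v; rewrite !pair_scaleE !pair_addE !scaler0 !addr0.
  - by move=> v; rewrite !pair_addE /uncurry6 /= !add0r.
have -> : 'd (uncurry6 L) (((q, l), (q1, l1)), (u1, u2)) (((0, 0), (0, 0)), (0, w6)) = 0.
  rewrite (diff_slot_grad (i := fun v => (((0, 0), (0, 0)), (0, v)))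
    (G := fun a => L q l q1 l1 u1 a) (z := u2) dL) ?crit_u2 ?dotvr0 //.
  - by move=> a u v; rewrite !pair_scaleE !pair_addE !scaler0 !addr0.
  - by move=> v; rewrite !pair_addE /uncurry6 /= !add0r.
rewrite !addr0 (diff_slot_grad (i := fun v => (((v, 0), (0, 0)), (0, 0)))
          (G := fun a => L a l q1 l1 u1 u2) (z := q) dL)
  ?(diff_slot_grad (i := fun v => (((0, v), (0, 0)), (0, 0)))
          (G := fun a => L q a q1 l1 u1 u2) (z := l) dL)
  ?(diff_slot_grad (i := fun v => (((0, 0), (v, 0)), (0, 0)))
          (G := fun a => L q l a l1 u1 u2) (z := q1) dL)
  ?(diff_slot_grad (i := fun v => (((0, 0), (0, v)), (0, 0)))
          (G := fun a => L q l q1 a u1 u2) (z := l1) dL) //.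
all: try by move=> a u v; rewrite !pair_scaleE !pair_addE !scaler0 !addr0.
all: by move=> v; rewrite !pair_addE /uncurry6 /= !add0r.
Qed.

End Partials.

Section DiscreteNoether.
Variable R : realType.

Lemma diff_const_along_curve (X : normedModType R) (F : X -> R) (G : R -> X) :
  differentiable G 0 -> differentiable F (G 0) -> (forall s, F (G s) = F (G 0)) ->
  'd F (G 0) ('D_1 G 0) = 0.
Proof.
move=> dG dF FG; rewrite deriveE // -[LHS]/(('d F (G 0) \o 'd G 0) 1) -diff_comp //.
by rewrite (_ : F \o G = cst (F (G 0))) ?diff_cst //; apply: funext => s; exact: FG.
Qed.

Variables (n m : nat)
  (L : 'cV[R]_n -> 'cV[R]_n -> 'cV[R]_n -> 'cV[R]_n -> 'cV[R]_m -> 'cV[R]_m -> R)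
  (q l q1 l1 : cV R n) (u1 u2 : cV R m)
  (g1 g2 g3 g4 : R -> 'cV[R]_n) (g5 g6 : R -> 'cV[R]_m).
Hypothesis dL : differentiable (uncurry6 L) (((q, l), (q1, l1)), (u1, u2)).
Hypotheses (dg1 : differentiable g1 0) (dg2 : differentiable g2 0)
  (dg3 : differentiable g3 0) (dg4 : differentiable g4 0)
  (dg5 : differentiable g5 0) (dg6 : differentiable g6 0).
Hypotheses (g1_0 : g1 0 = q) (g2_0 : g2 0 = l) (g3_0 : g3 0 = q1) (g4_0 : g4 0 = l1)
  (g5_0 : g5 0 = u1) (g6_0 : g6 0 = u2).
Hypothesis L_invariant :
  forall s, L (g1 s) (g2 s) (g3 s) (g4 s) (g5 s) (g6 s) = L q l q1 l1 u1 u2.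
Hypotheses (L_crit_u1 : grad (fun u => L q l q1 l1 u u2) u1 = 0)
  (L_crit_u2 : grad (fun u => L q l q1 l1 u1 u) u2 = 0).

Lemma discrete_noether_identity :
    dotv ('D_1 g1 0) (grad (fun a => L a l q1 l1 u1 u2) q)
  + dotv ('D_1 g2 0) (grad (fun a => L q a q1 l1 u1 u2) l)
  + dotv ('D_1 g3 0) (grad (fun a => L q l a l1 u1 u2) q1)
  + dotv ('D_1 g4 0) (grad (fun a => L q l q1 a u1 u2) l1) = 0.
Proof.
pose G s := (((g1 s, g2 s), (g3 s, g4 s)), (g5 s, g6 s)).
have dG : differentiable G 0 by do !apply: differentiable_pair.
have G0 : G 0 = (((q, l), (q1, l1)), (u1, u2)) by rewrite /G g1_0 g2_0 g3_0 g4_0 g5_0 g6_0.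
have := diff_const_along_curve (F := uncurry6 L) dG.
rewrite G0 => /(_ dL L_invariant); rewrite deriveE //.
rewrite (diff_val (is_diff_def := is_diff_pair (is_diff_pair
  (is_diff_pair (differentiableP dg1) (differentiableP dg2))
  (is_diff_pair (differentiableP dg3) (differentiableP dg4)))
  (is_diff_pair (differentiableP dg5) (differentiableP dg6)))) /=.
rewrite diff_uncurry6_grad //.
by rewrite !deriveE.
Qed.
End DiscreteNoether.

Section Conservation.
Variables (R : realType) (n : nat).
Local Notation L4 := ('cV[R]_n -> 'cV[R]_n -> 'cV[R]_n -> 'cV[R]_n -> R).

Lemma conserved_along_of_noether_identity (B : 'M[R]_n) (d : 'cV[R]_n)
    (Lk : nat -> L4) (qs ls : nat -> 'cV[R]_n) (N : nat) :
  (forall k, (0 < k)%N -> (k.+1 < N)%N ->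
      dotv (B *m qs k + d) (D1q (Lk k) (qs k) (ls k) (qs k.+1) (ls k.+1))
    + dotv (- (B^T *m ls k)) (D1l (Lk k) (qs k) (ls k) (qs k.+1) (ls k.+1))
    + dotv (B *m qs k.+1 + d) (D2q (Lk k) (qs k) (ls k) (qs k.+1) (ls k.+1))
    + dotv (- (B^T *m ls k.+1)) (D2l (Lk k) (qs k) (ls k) (qs k.+1) (ls k.+1)) = 0) ->
  conserved_along B d Lk qs ls N.
Proof.
move=> noether DEL_k.
have step k : (0 < k)%N -> (k.+1 < N)%N -> Id_k B d Lk qs ls k.+1 = Id_k B d Lk qs ls k.
  move=> k_gt0 kN; have [] : DEL Lk qs ls k.+1 by apply: DEL_k; rewrite ltn0Sn.
  rewrite /= => /eqP; rewrite addr_eq0 => /eqP Eq /eqP; rewrite addr_eq0 => /eqP El.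
  have := noether k k_gt0 kN; rewrite /Id_k /Inoether /pq_k /pl_k Eq El !dotvNl !dotvNr.
  rewrite !(dotvC _ (D1q _ _ _ _ _)) !(dotvC _ (D1l _ _ _ _ _)) opprK => H; lra.
have Id_1 k : (0 < k < N)%N -> Id_k B d Lk qs ls k = Id_k B d Lk qs ls 1.
  elim: k => [//|[//|k] IH] /andP[_ kN].
  by rewrite step // IH // ltn0Sn ltnW.
by move=> k j kN jN; rewrite Id_1 // Id_1.
Qed.

End Conservation.

Section CurveDerivatives.
Variable R : realType.

Lemma derive1_mulmxr a b c (M : R -> 'M[R]_(a, b)) (v : 'M[R]_(b, c)) t :
  differentiable M t -> 'D_1 (fun s => M s *m v) t = 'D_1 M t *m v.
Proof.
move=> dM; have dMv : differentiable (fun s => M s *m v) t.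
  by apply: differentiable_mulmx => //; exact: differentiable_cst.
rewrite !derive_mx; try exact: diff_derivable.
apply/matrixP => i j; rewrite !mxE.
have -> : (fun s => (M s *m v) i j) = \sum_k (fun s => v k j *: M s i k).
  by apply: funext => s; rewrite fct_sumE mxE; apply: eq_bigr => k _; rewrite mulrC.
have dMik k : differentiable (fun s => M s i k) t by exact: differentiable_mx_coord.
rewrite derive_sum => [|k]; last exact/diff_derivable/differentiableZ.
by apply: eq_bigr => k _; rewrite deriveZ ?mxE 1?mulrC //; exact: diff_derivable.
Qed.

Lemma derive1_trmx a b (M : R -> 'M[R]_(a, b)) t :
  differentiable M t -> 'D_1 (fun s => (M s)^T) t = ('D_1 M t)^T.
Proof.
move=> dM; have dMT : differentiable (fun s => (M s)^T) t by exact: differentiable_trmx.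
rewrite !derive_mx; try exact: diff_derivable.
apply/matrixP => i j; rewrite !mxE; congr ('D_1 _ t).
by apply: funext => s; rewrite mxE.
Qed.

Lemma derive1_comp_opp (W : normedModType R) (M : R -> W) t :
  differentiable M (- t) -> 'D_1 (fun s => M (- s)) t = - 'D_1 M (- t).
Proof.
move=> dM; transitivity ('D_(-1) M (- t)); last by rewrite !deriveE // linearN.
rewrite /derive; do 2 f_equal; apply: funext => h /=.
by rewrite opprD scalerN.
Qed.

End CurveDerivatives.

Section Smoothness.
Variable R : realType.

Lemma smooth_differentiable (V W : normedModType R) (F : V -> W) :
  smooth F -> forall x, differentiable F x.
Proof. by move=> sF; have [] := sF 1%N. Qed.

Lemma sym_posdef_unitmx m (M : 'M[R]_m) : sym_posdef M -> M \in unitmx.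
Proof.
case=> Msym Mpos; rewrite unitmxE unitfE; apply/negP => /det0P[v v0 vM].
have MvT : M *m v^T = 0 by rewrite -Msym -trmx_mul vM trmx0.
by have := Mpos v^T; rewrite trmx_eq0 v0 MvT dotvr0 ltxx => /(_ isT).
Qed.

End Smoothness.

Section AffineEquivariance.
Variables (R : realType) (n m : nat) (f : 'cV[R]_n -> 'cV[R]_n -> 'cV[R]_n)
  (rho : 'cV[R]_n -> 'M[R]_(n, m)) (g : 'cV[R]_n -> 'M[R]_m).

Lemma cvx_affine p (gam : R) (M : 'M[R]_p) (c x y : 'cV[R]_p) :
  cvx gam (M *m x + c) (M *m y + c) = M *m cvx gam x y + c.
Proof.
rewrite /cvx !scalerDr mulmxDr !scalemxAr addrACA -scalerDl.
by rewrite [gam + _]addrC subrK scale1r.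
Qed.

Lemma cvx_mulmx p (gam : R) (M : 'M[R]_p) (x y : 'cV[R]_p) :
  cvx gam (M *m x) (M *m y) = M *m cvx gam x y.
Proof. by have := cvx_affine gam M 0 x y; rewrite !addr0. Qed.

Lemma dq_affine p (h : R) (M : 'M[R]_p) (c x y : 'cV[R]_p) :
  dq h (M *m x + c) (M *m y + c) = M *m dq h x y.
Proof. by rewrite /dq opprD addrACA subrr addr0 -mulmxBr scalemxAr. Qed.

Lemma dq_mulmx p (h : R) (M : 'M[R]_p) (x y : 'cV[R]_p) :
  dq h (M *m x) (M *m y) = M *m dq h x y.
Proof. by have := dq_affine h M 0 x y; rewrite !addr0. Qed.

Lemma Ltd_affine_invariant (M N : 'M[R]_n) (c : 'cV[R]_n) alpha gam h :
  (forall q l v vl, Lt f rho g (M *m q + c) (N *m l) (M *m v) (N *m vl) = Lt f rho g q l v vl) ->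
  forall qk lk qk1 lk1,
    Ltd f rho g alpha gam h (M *m qk + c) (N *m lk) (M *m qk1 + c) (N *m lk1)
    = Ltd f rho g alpha gam h qk lk qk1 lk1.
Proof.
by move=> HL qk lk qk1 lk1; rewrite /Ltd !cvx_affine !cvx_mulmx !dq_affine !dq_mulmx !HL.
Qed.

Lemma LtdE_affine_invariant (M N : 'M[R]_n) (c : 'cV[R]_n) (P : 'cV[R]_n -> 'M[R]_m)
    alpha beta gam h :
  (forall q l v vl u,
     LtE f rho g (M *m q + c) (N *m l) (M *m v) (N *m vl) (P q *m u) = LtE f rho g q l v vl u) ->
  (beta = gam \/ forall x y, P x = P y) ->
  forall qk lk qk1 lk1 U1 U2,
    LtdE f rho g alpha gam h (M *m qk + c) (N *m lk) (M *m qk1 + c) (N *m lk1)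
      (P (cvx beta qk qk1) *m U1) (P (cvx (1 - beta) qk qk1) *m U2)
    = LtdE f rho g alpha gam h qk lk qk1 lk1 U1 U2.
Proof.
move=> HL beta_gam qk lk qk1 lk1 U1 U2.
have [-> ->] : P (cvx beta qk qk1) = P (cvx gam qk qk1) /\
               P (cvx (1 - beta) qk qk1) = P (cvx (1 - gam) qk qk1).
  by case: beta_gam => [->|P_cst]; split; rewrite ?P_cst.
by rewrite /LtdE !cvx_affine !cvx_mulmx !dq_affine !dq_mulmx !HL.
Qed.

End AffineEquivariance.

Section LagrangianDifferentiable.
Variables (R : realType) (n m : nat) (f : 'cV[R]_n -> 'cV[R]_n -> 'cV[R]_n)
  (rho : 'cV[R]_n -> 'M[R]_(n, m)) (g : 'cV[R]_n -> 'M[R]_m).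
Hypotheses (df : forall p, differentiable (fun p : 'cV[R]_n * 'cV[R]_n => f p.1 p.2) p)
  (drho : forall q, differentiable rho q) (dg : forall q, differentiable g q)
  (g_unit : forall q, g q \in unitmx).

Section Compositions.
Variables (X : normedModType R) (x : X).

Lemma differentiable_cvx k (gam : R) (P P1 : X -> 'cV[R]_k) :
  differentiable P x -> differentiable P1 x -> differentiable (fun y => cvx gam (P y) (P1 y)) x.
Proof. by move=> dP dP1; apply: differentiableD; exact: differentiableZ. Qed.

Lemma differentiable_dq k (h : R) (P P1 : X -> 'cV[R]_k) :
  differentiable P x -> differentiable P1 x -> differentiable (fun y => dq h (P y) (P1 y)) x.
Proof. by move=> dP dP1; apply: differentiableZ; exact: differentiableB. Qed.

Variables (Q Lm V VL : X -> 'cV[R]_n) (U : X -> 'cV[R]_m).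
Hypotheses (dQ : differentiable Q x) (dLm : differentiable Lm x)
  (dV : differentiable V x) (dVL : differentiable VL x) (dU : differentiable U x).

Let dfQV : differentiable (fun y => f (Q y) (V y)) x.
Proof. exact: differentiable_comp (differentiable_pair dQ dV) (df _). Qed.

Let drhoQ : differentiable (fun y => rho (Q y)) x.
Proof. exact: differentiable_comp dQ (drho _). Qed.

Let dgQ : differentiable (fun y => g (Q y)) x.
Proof. exact: differentiable_comp dQ (dg _). Qed.

Lemma differentiable_Lt : differentiable (fun y => Lt f rho g (Q y) (Lm y) (V y) (VL y)) x.
Proof.
apply: differentiableD; first apply: differentiableD.
- exact: differentiable_dotv.
- exact: differentiable_dotv dLm dfQV.
apply: differentiableM; first exact: differentiable_cst.
apply: differentiable_dotv => //; apply: differentiable_mulmx => //.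
apply: differentiable_mulmx; last exact: differentiable_trmx.
by apply: differentiable_mulmx => //; exact: differentiable_invmx.
Qed.

Lemma differentiable_LtE :
  differentiable (fun y => LtE f rho g (Q y) (Lm y) (V y) (VL y) (U y)) x.
Proof.
apply: differentiableB; first apply: differentiableD.
- exact: differentiable_dotv.
- apply: differentiable_dotv => //; apply: differentiableD => //.
  exact: differentiable_mulmx.
apply: differentiableM; first exact: differentiable_cst.
by apply: differentiable_dotv => //; exact: differentiable_mulmx.
Qed.

End Compositions.

Variables (alpha gam h : R).
Variable p : ((cV R n * cV R n) * (cV R n * cV R n)) * (cV R m * cV R m).

Lemma differentiable_uncurry6_Ltd :
  differentiable (uncurry6 (fun a b c d (_ _ : 'cV[R]_m) => Ltd f rho g alpha gam h a b c d)) p.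
Proof.
rewrite /uncurry6 /Ltd.
apply: differentiableD; apply: differentiableM; try exact: differentiable_cst;
  apply: differentiable_Lt; (apply: differentiable_cvx || apply: differentiable_dq);
  do ![apply: differentiable_fst_comp | apply: differentiable_snd_comp].
all: by [].
Qed.

Lemma differentiable_uncurry6_LtdE :
  differentiable (uncurry6 (LtdE f rho g alpha gam h)) p.
Proof.
rewrite /uncurry6 /LtdE.
apply: differentiableM; first exact: differentiable_cst.
apply: differentiableD; apply: differentiableM; try exact: differentiable_cst;
  apply: differentiable_LtE; try (apply: differentiable_cvx || apply: differentiable_dq);
  do ![apply: differentiable_fst_comp | apply: differentiable_snd_comp].
all: by [].
Qed.

End LagrangianDifferentiable.

Section AffineGroupAction.
Variables (R : realType) (n m : nat) (A : R -> 'M[R]_n) (c : R -> 'cV[R]_n).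
Hypotheses (dA : differentiable A 0) (dc : differentiable c 0)
  (A0 : A 0 = 1%:M) (c0 : c 0 = 0) (A_add : forall s t, A (s + t) = A s *m A t).

Lemma invT_group s : invT (A s) = (A (- s))^T.
Proof.
have AAN : A s *m A (- s) = 1%:M by rewrite -A_add subrr A0.
have [As_unit _] := mulmx1_unit AAN.
by rewrite /invT -[invmx (A s)]mulmx1 -AAN mulmxA mulVmx ?mul1mx.
Qed.

Let orbit_l_eq (l : 'cV[R]_n) : (fun s => invT (A s) *m l) = (fun s => (A (- s))^T *m l).
Proof. by apply: funext => s; rewrite invT_group. Qed.

Let dAN : differentiable (fun s => A (- s)) 0.
Proof. by apply: differentiable_comp; rewrite ?oppr0. Qed.

Let dorbit_q (q : 'cV[R]_n) : differentiable (fun s => A s *m q + c s) 0.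
Proof. by apply: differentiableD => //; apply: differentiable_mulmx. Qed.

Let dorbit_l (l : 'cV[R]_n) : differentiable (fun s => invT (A s) *m l) 0.
Proof.
by rewrite orbit_l_eq; apply: differentiable_mulmx => //; exact: differentiable_trmx.
Qed.

Lemma derive1_orbit_q (q : 'cV[R]_n) : 'D_1 (fun s => A s *m q + c s) 0 = 'D_1 A 0 *m q + 'D_1 c 0.
Proof.
have dAq : differentiable (fun s => A s *m q) 0 by exact: differentiable_mulmx.
rewrite (_ : (fun s => _) = (fun s => A s *m q) + c) // deriveD ?derive1_mulmxr //;
  exact: diff_derivable.
Qed.

Lemma derive1_orbit_l (l : 'cV[R]_n) : 'D_1 (fun s => invT (A s) *m l) 0 = - (('D_1 A 0)^T *m l).
Proof.
rewrite orbit_l_eq derive1_mulmxr ?derive1_trmx ?derive1_comp_opp ?oppr0 //.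
  by rewrite linearN mulNmx.
exact: differentiable_trmx.
Qed.

Variables (L : 'cV[R]_n -> 'cV[R]_n -> 'cV[R]_n -> 'cV[R]_n -> 'cV[R]_m -> 'cV[R]_m -> R)
  (T1 T2 : R -> 'cV[R]_n -> 'cV[R]_n -> 'M[R]_m).
Hypothesis dL : forall p : ((cV R n * cV R n) * (cV R n * cV R n)) * (cV R m * cV R m),
  differentiable (uncurry6 L) p.
Hypotheses (dT1 : forall x y (u : 'cV[R]_m), differentiable (fun s => T1 s x y *m u) 0)
  (dT2 : forall x y (u : 'cV[R]_m), differentiable (fun s => T2 s x y *m u) 0)
  (T1_0 : forall x y (u : 'cV[R]_m), T1 0 x y *m u = u)
  (T2_0 : forall x y (u : 'cV[R]_m), T2 0 x y *m u = u).
Hypothesis L_invariant : forall s qk lk qk1 lk1 u1 u2,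
  L (A s *m qk + c s) (invT (A s) *m lk) (A s *m qk1 + c s) (invT (A s) *m lk1)
    (T1 s qk qk1 *m u1) (T2 s qk qk1 *m u2) = L qk lk qk1 lk1 u1 u2.

Lemma conserved_along_orbit_invariant (qs ls : nat -> 'cV[R]_n) (U1s U2s : nat -> 'cV[R]_m)
    (N : nat) :
  (forall k, (k < N)%N ->
     grad (fun u => L (qs k) (ls k) (qs k.+1) (ls k.+1) u (U2s k)) (U1s k) = 0 /\
     grad (fun u => L (qs k) (ls k) (qs k.+1) (ls k.+1) (U1s k) u) (U2s k) = 0) ->
  conserved_along ('D_1 A 0) ('D_1 c 0)
    (fun k (a b a1 b1 : 'cV[R]_n) => L a b a1 b1 (U1s k) (U2s k)) qs ls N.
Proof.
move=> crit; apply: conserved_along_of_noether_identity => k _ kN.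
have [crit1 crit2] := crit k (ltnW kN).
have orbit_q0 (q : 'cV[R]_n) : A 0 *m q + c 0 = q by rewrite A0 c0 mul1mx addr0.
have orbit_l0 (l : 'cV[R]_n) : invT (A 0) *m l = l by rewrite invT_group oppr0 A0 trmx1 mul1mx.
rewrite -!derive1_orbit_q -!derive1_orbit_l.
exact: (discrete_noether_identity (dL _) (dorbit_q _) (dorbit_l _) (dorbit_q _) (dorbit_l _)
  (dT1 _ _ _) (dT2 _ _ _) (orbit_q0 _) (orbit_l0 _) (orbit_q0 _) (orbit_l0 _)
  (T1_0 _ _ _) (T2_0 _ _ _) (fun s => L_invariant s _ _ _ _ _ _) crit1 crit2).
Qed.

End AffineGroupAction.

Theorem mainTheorem13 (R : realType) (n m : nat)
  (f : 'cV[R]_n -> 'cV[R]_n -> 'cV[R]_n) (rho : 'cV[R]_n -> 'M[R]_(n, m))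
  (g : 'cV[R]_n -> 'M[R]_m)
  (A : R -> 'M[R]_n) (c : R -> 'cV[R]_n) (Psi : R -> 'cV[R]_n -> 'M[R]_m)
  (h : R) :
  smooth (fun p : 'cV[R]_n * 'cV[R]_n => f p.1 p.2) ->
  smooth rho -> smooth g ->
  (forall q, injective (fun u : 'cV[R]_m => rho q *m u)) ->
  (forall q, sym_posdef (g q)) ->
  0 < h ->
  smooth (A : R^o -> 'M[R]_n) -> smooth (c : R^o -> 'cV[R]_n) ->
  (forall s, A s \in unitmx) -> A 0 = 1%:M -> c 0 = 0 ->
  (forall s t, A (s + t) = A s *m A t /\ c (s + t) = A s *m c t + c s) ->
  (forall q, smooth (fun s : R^o => Psi s q)) ->
  (forall s q, rho (A s *m q + c s) *m Psi s q = A s *m rho q) ->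
  let B := derive1 A 0 in
  let d := derive1 c 0 in
  ((forall s q l v vl,
      Lt f rho g (A s *m q + c s) (invT (A s) *m l) (A s *m v) (invT (A s) *m vl)
      = Lt f rho g q l v vl) ->
   forall alpha gam, 0 <= alpha <= 1 -> 0 <= gam <= 1 ->
     (forall s qk lk qk1 lk1,
        Ltd f rho g alpha gam h (A s *m qk + c s) (invT (A s) *m lk)
            (A s *m qk1 + c s) (invT (A s) *m lk1)
        = Ltd f rho g alpha gam h qk lk qk1 lk1)
     /\
     (forall (N : nat) (qs ls : nat -> 'cV[R]_n),
        conserved_along B d (fun _ : nat => Ltd f rho g alpha gam h) qs ls N))
  /\
  ((forall s q l v vl u,
      LtE f rho g (A s *m q + c s) (invT (A s) *m l) (A s *m v) (invT (A s) *m vl)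
          (Psi s q *m u)
      = LtE f rho g q l v vl u) ->
   forall alpha beta gam, 0 <= alpha <= 1 -> 0 <= beta <= 1 -> 0 <= gam <= 1 ->
   ((exists E : R -> 'M[R]_m, forall s q, Psi s q = E s) \/ beta = gam) ->
     (forall s qk lk qk1 lk1 U1 U2,
        LtdE f rho g alpha gam h (A s *m qk + c s) (invT (A s) *m lk)
            (A s *m qk1 + c s) (invT (A s) *m lk1)
            (Psi s (cvx beta qk qk1) *m U1) (Psi s (cvx (1 - beta) qk qk1) *m U2)
        = LtdE f rho g alpha gam h qk lk qk1 lk1 U1 U2)
     /\
     (forall (N : nat) (qs ls : nat -> 'cV[R]_n) (U1s U2s : nat -> 'cV[R]_m),
        (forall k, (k < N)%N ->
           grad (fun U => LtdE f rho g alpha gam h (qs k) (ls k) (qs k.+1) (ls k.+1)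
                                U (U2s k)) (U1s k) = 0 /\
           grad (fun U => LtdE f rho g alpha gam h (qs k) (ls k) (qs k.+1) (ls k.+1)
                                (U1s k) U) (U2s k) = 0) ->
        conserved_along B d
          (fun k => fun a b c' d' => LtdE f rho g alpha gam h a b c' d' (U1s k) (U2s k))
          qs ls N)).
Proof.
move=> sf srho sg rho_inj g_pd _ sA sc _ A0 c0 A_group sPsi rho_Psi B d.
have df := smooth_differentiable sf; have drho := smooth_differentiable srho.
have dg := smooth_differentiable sg.
have g_unit q : g q \in unitmx := sym_posdef_unitmx (g_pd q).
have dA := smooth_differentiable sA 0; have dc := smooth_differentiable sc 0.
have A_add s t : A (s + t) = A s *m A t := (A_group s t).1.
have Psi0 q (u : 'cV[R]_m) : Psi 0 q *m u = u.
  have := rho_Psi 0 q; rewrite A0 c0 !mul1mx addr0 => rhoPsi0.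
  by apply: (rho_inj q); rewrite /= mulmxA rhoPsi0.
have dPsi q (u : 'cV[R]_m) : differentiable (fun s => Psi s q *m u) 0.
  by apply: differentiable_mulmx; [exact: smooth_differentiable|exact: differentiable_cst].
rewrite /B /d !derive1E.
split=> [HL alpha gam _ _ | HL alpha beta gam _ _ _ Psi_cst].
  have inv s := Ltd_affine_invariant alpha gam h (HL s).
  split=> [s|N qs ls]; first exact: inv.
  have dT (x y : 'cV[R]_n) (u : 'cV[R]_m) : differentiable (fun _ : R => 1%:M *m u) 0.
    exact: differentiable_cst.
  have T0 (x y : 'cV[R]_n) (u : 'cV[R]_m) : 1%:M *m u = u := mul1mx u.
  exact: (conserved_along_orbit_invariant dA dc A0 c0 A_add
    (differentiable_uncurry6_Ltd df drho dg g_unit alpha gam h) dT dT T0 T0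
    (fun s qk lk qk1 lk1 _ _ => inv s qk lk qk1 lk1)
    (fun k _ => conj (grad_cst _ 0) (grad_cst _ 0))).
have Psi_case s : beta = gam \/ forall x y, Psi s x = Psi s y.
  by case: Psi_cst => [[E PsiE]|->]; [right=> x y; rewrite !PsiE|left].
have inv s := LtdE_affine_invariant alpha h (HL s) (Psi_case s).
split=> [s|N qs ls U1s U2s crit]; first exact: inv.
exact: (conserved_along_orbit_invariant (T1 := fun s x y => Psi s (cvx beta x y))
  (T2 := fun s x y => Psi s (cvx (1 - beta) x y)) dA dc A0 c0 A_add
  (differentiable_uncurry6_LtdE df drho dg alpha gam h)
  (fun x y => dPsi _) (fun x y => dPsi _) (fun x y => Psi0 _) (fun x y => Psi0 _) inv crit).
Qed.
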